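(* Every ideal $J$ of $\widetilde{\mathbb{R}}_{sm}$ is absolutely convex: if $x\in J$ and $y\in\widetilde{\mathbb{R}}_{sm}$ with $|y|\le|x|$, then $y\in J$.
   Context: Let $I=(0,1]$. $\widetilde{\mathbb{R}}_{sm}=\mathcal{E}_{M,sm}/\mathcal{N}_{sm}$ where $\mathcal{E}_{M,sm}$ is the set of smooth nets $(r_\varepsilon)_{\varepsilon\in I}\in\mathbb{R}^I$ with $|r_\varepsilon|=O(\varepsilon^{-N})$ for some $N$, and $\mathcal{N}_{sm}$ those with $|r_\varepsilon|=O(\varepsilon^m)$ for all $m$. The natural map $\tau_{sm}$ from $\widetilde{\mathbb{R}}_{sm}$ to the analogous ring $\widetilde{\mathbb{R}}_{co}$ of continuously parametrized nets is a ring isomorphism. Order: $r\le s$ iff there are representatives with $r_\varepsilon\le s_\varepsilon$ for all $\varepsilon$. Absolute value: $|x|=\tau_{sm}^{-1}([(|x_\varepsilon|)_\varepsilon])$. *)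

From Stdlib Require Import Reals Lra ClassicalEpsilon.
Open Scope R_scope.

(** The parameter interval I = (0,1]. Nets are functions R -> R of which only
    the values on I matter. *)
Definition Iint (e : R) : Prop := 0 < e /\ e <= 1.

Definition net := R -> R.

Definition is_derive_in (f : net) (x l : R) : Prop :=
  forall eps, 0 < eps -> exists delta, 0 < delta /\
    forall h, h <> 0 -> Rabs h < delta -> Iint (x + h) ->
      Rabs ((f (x + h) - f x) / h - l) < eps.

Definition continuous_on_I (f : net) : Prop :=
  forall x, Iint x -> forall eps, 0 < eps -> exists delta, 0 < delta /\
    forall y, Iint y -> Rabs (y - x) < delta -> Rabs (f y - f x) < eps.

Definition smooth_on_I (f : net) : Prop :=
  exists D : nat -> net,
    (forall t, Iint t -> D 0%nat t = f t) /\
    (forall n t, Iint t -> is_derive_in (D n) t (D (S n) t)).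

Definition moderate (r : net) : Prop :=
  exists (N : nat) (C eps0 : R), 0 < eps0 /\
    forall e, Iint e -> e <= eps0 -> Rabs (r e) <= C / e ^ N.

Definition negligible (r : net) : Prop :=
  forall m : nat, exists (C eps0 : R), 0 < eps0 /\
    forall e, Iint e -> e <= eps0 -> Rabs (r e) <= C * e ^ m.

Definition E_sm (r : net) : Prop := smooth_on_I r /\ moderate r.
Definition E_co (r : net) : Prop := continuous_on_I r /\ moderate r.

(** Ambient quotient R^I / (negligible nets): classes of nets. Both
    R~_sm = E_sm/N_sm and R~_co = E_co/N_co embed into it (the class of a
    smooth net modulo N_sm is determined by its ambient class), and under this
    embedding the natural map tau_sm is the inclusion. *)
Definition cls (r : net) : net -> Prop :=
  fun s => negligible (fun e => s e - r e).

Record Q := mkQ { qset : net -> Prop ; qok : exists r, qset = cls r }.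

Definition class (r : net) : Q := mkQ (cls r) (ex_intro _ r eq_refl).

Definition rep (x : Q) : net :=
  proj1_sig (constructive_indefinite_description _ (qok x)).

Definition in_Rsm (x : Q) : Prop := exists r, E_sm r /\ qset x r.
Definition in_Rco (x : Q) : Prop := exists r, E_co r /\ qset x r.

Definition qzero : Q := class (fun _ => 0).
Definition qadd (x y : Q) : Q := class (fun e => rep x e + rep y e).
Definition qopp (x : Q) : Q := class (fun e => - rep x e).
Definition qmul (x y : Q) : Q := class (fun e => rep x e * rep y e).

(** Absolute value: |x| = tau_sm^{-1}([ (|x_eps|) ]), i.e. the class of the
    continuous net |x_eps|, viewed back in R~_sm. *)
Definition qabs (x : Q) : Q := class (fun e => Rabs (rep x e)).

Definition qle (x y : Q) : Prop :=
  exists a b, E_sm a /\ E_sm b /\ qset x a /\ qset y b /\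
    forall e, Iint e -> a e <= b e.

Definition is_ideal_sm (J : Q -> Prop) : Prop :=
  (forall x, J x -> in_Rsm x) /\
  J qzero /\
  (forall x y, J x -> J y -> J (qadd x y)) /\
  (forall x, J x -> J (qopp x)) /\
  (forall a x, in_Rsm a -> J x -> J (qmul a x)).

From Stdlib Require Import Reals Lra Lia ClassicalEpsilon FunctionalExtensionality PropExtensionality ProofIrrelevance.
From Coquelicot Require Import Coquelicot.
Open Scope R_scope.

(** Represent [x], [y] by smooth moderate nets [X], [Y], and [|y| <= |x|] by
    smooth nets [a <= b] with [a ~ |Y|], [b ~ |X|] (equal up to negligible
    nets). As [a + b] is nonnegative up to a negligible error, [a <= b] yields
    [Y^2 <= X^2 + phi] for a smooth, positive, negligible net [phi]; the
    smoothing uses the flat net [exp (-1/e)]. Then [c = X Y / (X^2 + phi)] is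
    smooth with [|c| <= 1], and [Y - c X = Y phi / (X^2 + phi)] has square at
    most [phi], hence is negligible. So [y = [c] x] lies in [J]. *)

Definition punctured_I (x : R) : (R -> Prop) -> Prop :=
  within (fun h => h <> 0 /\ Iint (x + h)) (locally 0).

Global Instance punctured_I_filter x : Filter (punctured_I x).
Proof. apply within_filter, locally_filter. Qed.

Lemma is_derive_in_filterlim f x l : is_derive_in f x l <->
  filterlim (fun h => (f (x + h) - f x) / h) (punctured_I x) (locally l).
Proof.
  split.
  - intros H. apply filterlim_locally. intros [e he].
    destruct (H e he) as [d [hd Hd]].
    exists (mkposreal d hd). intros h Hh [h0 hI]. apply Hd; auto.
    change (Rabs (h - 0) < d) in Hh. now rewrite Rminus_0_r in Hh.
  - intros H e he.
    destruct (proj1 (filterlim_locally _ _) H (mkposreal e he)) as [[d hd] Hd].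
    exists d. split; auto. intros h h0 hh hI. apply Hd; auto.
    change (Rabs (h - 0) < d). now rewrite Rminus_0_r.
Qed.

Lemma filterlim_punctured_I_ext {U} x (f g : R -> U) G :
  (forall h, h <> 0 -> Iint (x + h) -> f h = g h) ->
  filterlim f (punctured_I x) G -> filterlim g (punctured_I x) G.
Proof.
  intros E. apply filterlim_within_ext. intros h [h0 hI]. auto.
Qed.

Lemma filterlim_Rplus_fun {T} F {FF : Filter F} (f g : T -> R) a b :
  filterlim f F (locally a) -> filterlim g F (locally b) ->
  filterlim (fun t => f t + g t) F (locally (a + b)).
Proof. intros Hf Hg. exact (filterlim_comp_2 f g Rplus Hf Hg (filterlim_plus a b)). Qed.

Lemma filterlim_Rmult_fun {T} F {FF : Filter F} (f g : T -> R) a b :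
  filterlim f F (locally a) -> filterlim g F (locally b) ->
  filterlim (fun t => f t * g t) F (locally (a * b)).
Proof. intros Hf Hg. exact (filterlim_comp_2 f g Rmult Hf Hg (filterlim_mult a b)). Qed.

Lemma is_derive_in_continuous f x l : is_derive_in f x l ->
  filterlim (fun h => f (x + h)) (punctured_I x) (locally (f x)).
Proof.
  intros H. apply is_derive_in_filterlim in H.
  assert (Hid : filterlim (fun h => h) (punctured_I x) (locally 0)).
  { intros P [e He]. exists e. intros y Hy _. apply He; auto. }
  assert (Hlim := filterlim_Rplus_fun _ _ _ _ _
    (filterlim_Rmult_fun _ _ _ _ _ Hid H) (filterlim_const (F := punctured_I x) (f x))).
  rewrite Rmult_0_l, Rplus_0_l in Hlim.
  refine (filterlim_punctured_I_ext x _ _ _ _ Hlim). intros h h0 _. field. auto.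
Qed.

Lemma is_derive_in_ext f g x l : (forall t, Iint t -> f t = g t) -> Iint x ->
  is_derive_in f x l -> is_derive_in g x l.
Proof.
  intros E Hx H e he. destruct (H e he) as [d [hd Hd]]. exists d. split; auto.
  intros h h0 hh hI. rewrite <- !E; auto.
Qed.

Lemma is_derive_in_const c x : is_derive_in (fun _ => c) x 0.
Proof.
  intros e he. exists 1. split; [lra|]. intros h h0 _ _.
  replace ((c - c) / h - 0) with 0 by (field; auto). rewrite Rabs_R0; auto.
Qed.

Lemma is_derive_in_id x : is_derive_in (fun t => t) x 1.
Proof.
  intros e he. exists 1. split; [lra|]. intros h h0 _ _.
  replace ((x + h - x) / h - 1) with 0 by (field; auto). rewrite Rabs_R0; auto.
Qed.

Lemma is_derive_in_plus f g x a b : is_derive_in f x a -> is_derive_in g x b ->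
  is_derive_in (fun t => f t + g t) x (a + b).
Proof.
  rewrite !is_derive_in_filterlim. intros Hf Hg.
  refine (filterlim_punctured_I_ext x _ _ _ _ (filterlim_Rplus_fun _ _ _ _ _ Hf Hg)).
  intros h h0 _. field. auto.
Qed.

Lemma is_derive_in_mult f g x a b : is_derive_in f x a -> is_derive_in g x b ->
  is_derive_in (fun t => f t * g t) x (a * g x + f x * b).
Proof.
  intros Hf Hg. pose proof (is_derive_in_continuous _ _ _ Hf) as Cf.
  rewrite is_derive_in_filterlim in *.
  assert (H := filterlim_Rplus_fun _ _ _ _ _
    (filterlim_Rmult_fun _ _ _ _ _ Hf (filterlim_const (F := punctured_I x) (g x)))
    (filterlim_Rmult_fun _ _ _ _ _ Cf Hg)).
  refine (filterlim_punctured_I_ext x _ _ _ _ H). intros h h0 _. field. auto.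
Qed.

Lemma is_derive_in_comp (phi : R -> R) d f x l : is_derive phi (f x) d ->
  is_derive_in f x l -> is_derive_in (fun t => phi (f t)) x (d * l).
Proof.
  intros Hp Hf. apply is_derive_Reals in Hp.
  pose proof (is_derive_in_continuous _ _ _ Hf) as Cf.
  apply is_derive_in_filterlim in Hf. apply is_derive_in_filterlim.
  set (y0 := f x) in *.
  (* the difference quotient of [phi] at [y0], extended continuously *)
  set (q := fun y => if Req_EM_T y y0 then d else (phi y - phi y0) / (y - y0)).
  assert (Cq : filterlim q (locally y0) (locally d)).
  { apply filterlim_locally. intros [e he].
    destruct (Hp e he) as [[dl hdl] Hd]. exists (mkposreal dl hdl). intros y Hy. change R in y.
    change (Rabs (y - y0) < dl) in Hy. change (Rabs (q y - d) < e). unfold q.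
    destruct (Req_EM_T y y0) as [_|Hne]; [rewrite Rminus_diag, Rabs_R0; auto|].
    specialize (Hd (y - y0)). replace (y0 + (y - y0)) with y in Hd by ring.
    apply Hd; auto. intros E; apply Hne; lra. }
  assert (H := filterlim_Rmult_fun _ _ _ _ _ (filterlim_comp _ _ _ _ q _ _ _ Cf Cq) Hf).
  refine (filterlim_punctured_I_ext x _ _ _ _ H). intros h h0 _. unfold q.
  destruct (Req_EM_T (f (x + h)) y0) as [E|E].
  - rewrite E. unfold Rdiv. rewrite !Rminus_diag. ring.
  - field. split; auto. intros Z; apply E; lra.
Qed.

Lemma smooth_on_I_derive f : smooth_on_I f ->
  exists g, smooth_on_I g /\ forall t, Iint t -> is_derive_in f t (g t).
Proof.
  intros [D [H0 HD]]. exists (D 1%nat). split.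
  - exists (fun n => D (S n)). split; auto.
  - intros t Ht. apply (is_derive_in_ext (D 0%nat)); auto.
Qed.

Lemma smooth_on_I_of_derive_closed (S : net -> Prop) :
  (forall f, S f -> exists g, S g /\ forall t, Iint t -> is_derive_in f t (g t)) ->
  forall f, S f -> smooth_on_I f.
Proof.
  intros HS f Hf.
  set (d := fun f : net => epsilon (inhabits (fun _ : R => 0))
     (fun g => S f -> S g /\ forall t, Iint t -> is_derive_in f t (g t))).
  assert (Hd : forall f, S f -> S (d f) /\ forall t, Iint t -> is_derive_in f t (d f t)).
  { intros g Hg. refine (epsilon_spec (inhabits (fun _ : R => 0))
      (fun g0 => S g -> S g0 /\ forall t, Iint t -> is_derive_in g t (g0 t)) _ Hg).
    destruct (HS g Hg) as [h Hh]. exists h. intros _. exact Hh. }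
  assert (HSd : forall n, S (Nat.iter n d f)) by (induction n; simpl; auto; apply Hd; auto).
  exists (fun n => Nat.iter n d f). split; [reflexivity|].
  intros n t Ht. apply Hd; auto.
Qed.

Inductive smooth_algebra (A : net -> Prop) : net -> Prop :=
| sa_smooth f : smooth_on_I f -> smooth_algebra A f
| sa_gen f : A f -> smooth_algebra A f
| sa_plus f g : smooth_algebra A f -> smooth_algebra A g ->
    smooth_algebra A (fun t => f t + g t)
| sa_mult f g : smooth_algebra A f -> smooth_algebra A g ->
    smooth_algebra A (fun t => f t * g t)
| sa_ext f g : smooth_algebra A f -> (forall t, Iint t -> f t = g t) ->
    smooth_algebra A g.

(** By the sum and product rules the algebra is closed under differentiation
    as soon as its generators have derivatives in it. *)
Lemma smooth_algebra_smooth (A : net -> Prop) :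
  (forall f, A f -> exists g, smooth_algebra A g /\
     forall t, Iint t -> is_derive_in f t (g t)) ->
  forall f, smooth_algebra A f -> smooth_on_I f.
Proof.
  intros HA. apply smooth_on_I_of_derive_closed. intros f Hf. induction Hf.
  - destruct (smooth_on_I_derive f H) as [g [Hg Dg]].
    exists g. split; auto. now apply sa_smooth.
  - auto.
  - destruct IHHf1 as [f' [H1 D1]], IHHf2 as [g' [H2 D2]].
    exists (fun t => f' t + g' t). split; [now apply sa_plus|].
    intros t Ht; apply is_derive_in_plus; auto.
  - destruct IHHf1 as [f' [H1 D1]], IHHf2 as [g' [H2 D2]].
    exists (fun t => f' t * g t + f t * g' t). split.
    + apply sa_plus; apply sa_mult; auto.
    + intros t Ht; apply is_derive_in_mult; auto.
  - destruct IHHf as [f' [H1 D1]]. exists f'. split; auto.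
    intros t Ht. apply (is_derive_in_ext f); auto.
Qed.

Lemma smooth_algebra_empty f : smooth_algebra (fun _ => False) f -> smooth_on_I f.
Proof. apply smooth_algebra_smooth. intros _ []. Qed.

Lemma smooth_const c : smooth_on_I (fun _ => c).
Proof.
  exists (fun n => match n with O => fun _ => c | _ => fun _ => 0 end).
  split; [reflexivity|]. intros [|n] t _; apply is_derive_in_const.
Qed.

Lemma smooth_id : smooth_on_I (fun t => t).
Proof.
  exists (fun n => match n with O => fun t => t | 1%nat => fun _ => 1 | _ => fun _ => 0 end).
  split; [reflexivity|].
  intros [|[|n]] t _; [apply is_derive_in_id | apply is_derive_in_const ..].
Qed.

Lemma smooth_plus f g : smooth_on_I f -> smooth_on_I g -> smooth_on_I (fun t => f t + g t).
Proof. intros; apply smooth_algebra_empty, sa_plus; now apply sa_smooth. Qed.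

Lemma smooth_mult f g : smooth_on_I f -> smooth_on_I g -> smooth_on_I (fun t => f t * g t).
Proof. intros; apply smooth_algebra_empty, sa_mult; now apply sa_smooth. Qed.

Lemma smooth_ext f g : (forall t, Iint t -> f t = g t) -> smooth_on_I f -> smooth_on_I g.
Proof. intros; apply smooth_algebra_empty. eapply sa_ext; eauto. now apply sa_smooth. Qed.

Lemma smooth_opp f : smooth_on_I f -> smooth_on_I (fun t => - f t).
Proof.
  intros H. apply (smooth_ext (fun t => (-1) * f t)); [intros; ring|].
  apply smooth_mult; auto using smooth_const.
Qed.

Lemma smooth_minus f g : smooth_on_I f -> smooth_on_I g -> smooth_on_I (fun t => f t - g t).
Proof. intros. apply smooth_plus; auto using smooth_opp. Qed.

Lemma smooth_inv u : smooth_on_I u -> (forall t, Iint t -> u t <> 0) ->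
  smooth_on_I (fun t => / u t).
Proof.
  intros Hu Hnz. destruct (smooth_on_I_derive u Hu) as [u' [Hu' Du]].
  apply (smooth_algebra_smooth (fun f => f = fun t => / u t)); [|now apply sa_gen].
  intros f ->. exists (fun t => (/ u t * / u t) * ((-1) * u' t)). split.
  - apply sa_mult; [apply sa_mult; now apply sa_gen|].
    apply sa_mult; apply sa_smooth; auto using smooth_const.
  - intros t Ht.
    assert (Hinv := is_derive_inv _ _ _ (is_derive_id (u t)) (Hnz t Ht)).
    replace (/ u t * / u t * (-1 * u' t)) with (- one / u t ^ 2 * u' t)
      by (unfold one; simpl; field; auto).
    exact (is_derive_in_comp _ _ u t _ Hinv (Du t Ht)).
Qed.

Lemma smooth_exp v : smooth_on_I v -> smooth_on_I (fun t => exp (v t)).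
Proof.
  intros Hv. destruct (smooth_on_I_derive v Hv) as [v' [Hv' Dv]].
  apply (smooth_algebra_smooth (fun f => f = fun t => exp (v t))); [|now apply sa_gen].
  intros f ->. exists (fun t => exp (v t) * v' t). split.
  - apply sa_mult; [now apply sa_gen | now apply sa_smooth].
  - intros t Ht. exact (is_derive_in_comp exp _ v t _ (is_derive_exp _) (Dv t Ht)).
Qed.

Lemma smooth_sqrt u : smooth_on_I u -> (forall t, Iint t -> 0 < u t) ->
  smooth_on_I (fun t => sqrt (u t)).
Proof.
  intros Hu Hp. destruct (smooth_on_I_derive u Hu) as [u' [Hu' Du]].
  set (s := fun t => sqrt (u t)). set (k := fun t => / s t).
  assert (Hs : forall t, Iint t -> s t <> 0) by (intros; apply Rgt_not_eq, sqrt_lt_R0; auto).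
  assert (Ds : forall t, Iint t -> is_derive_in s t (/ 2 * k t * u' t)).
  { intros t Ht.
    assert (Hsq := is_derive_sqrt _ _ _ (is_derive_id (u t)) (Hp t Ht)).
    replace (/ 2 * k t * u' t) with (one / (2 * sqrt (u t)) * u' t)
      by (unfold k, s, one; simpl; field; exact (Hs t Ht)).
    exact (is_derive_in_comp _ _ u t _ Hsq (Du t Ht)). }
  apply (smooth_algebra_smooth (fun f => f = s \/ f = k)); [|now apply sa_gen; left].
  intros f [-> | ->].
  - exists (fun t => / 2 * k t * u' t). split; auto.
    apply sa_mult; [apply sa_mult|]; auto using sa_smooth, smooth_const.
    apply sa_gen; now right.
  - exists (fun t => (k t * k t) * ((- / 2 * k t) * u' t)). split.
    + apply sa_mult; [apply sa_mult; apply sa_gen; now right|].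
      apply sa_mult; [apply sa_mult|]; auto using sa_smooth, smooth_const.
      apply sa_gen; now right.
    + intros t Ht.
      assert (Hinv := is_derive_inv _ _ _ (is_derive_id (s t)) (Hs t Ht)).
      replace (k t * k t * (- / 2 * k t * u' t))
        with (- one / s t ^ 2 * (/ 2 * k t * u' t)) by (unfold k, one; simpl; field; auto).
      exact (is_derive_in_comp _ _ s t _ Hinv (Ds t Ht)).
Qed.

Lemma pow_le_1_I e k : Iint e -> e ^ k <= 1.
Proof. intros [h1 h2]. rewrite <- (pow1 k). apply pow_incr; lra. Qed.

Lemma pow_pos_I e k : Iint e -> 0 < e ^ k.
Proof. intros [h1 h2]. now apply pow_lt. Qed.

Lemma negligible_le f g : (forall e, Iint e -> Rabs (f e) <= g e) ->
  negligible g -> negligible f.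
Proof.
  intros H Hg m. destruct (Hg m) as [C [e0 [He0 HC]]]. exists C, e0. split; auto.
  intros e He He'. apply Rle_trans with (1 := H e He).
  apply Rle_trans with (2 := HC e He He'). apply Rle_abs.
Qed.

Lemma negligible_abs f : negligible f -> negligible (fun e => Rabs (f e)).
Proof.
  intros Hf m. destruct (Hf m) as [C [e0 [He0 H]]]. exists C, e0. split; auto.
  intros e He He'. rewrite Rabs_Rabsolu. auto.
Qed.

Lemma negligible_ext f g : (forall e, Iint e -> f e = g e) -> negligible g -> negligible f.
Proof.
  intros E Hg. apply (negligible_le _ (fun e => Rabs (g e))); [|now apply negligible_abs].
  intros e He. rewrite E; auto. lra.
Qed.

Lemma negligible_zero : negligible (fun _ => 0).
Proof. intros m. exists 0, 1. split; [lra|]. intros e _ _. rewrite Rabs_R0. lra. Qed.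

Lemma negligible_plus f g : negligible f -> negligible g -> negligible (fun e => f e + g e).
Proof.
  intros Hf Hg m. destruct (Hf m) as [C1 [e1 [He1 H1]]], (Hg m) as [C2 [e2 [He2 H2]]].
  exists (C1 + C2), (Rmin e1 e2). split; [now apply Rmin_pos|].
  intros e He He'. pose proof (Rmin_l e1 e2). pose proof (Rmin_r e1 e2).
  specialize (H1 e He ltac:(lra)). specialize (H2 e He ltac:(lra)).
  apply Rle_trans with (1 := Rabs_triang _ _). lra.
Qed.

Lemma negligible_scal k f : negligible f -> negligible (fun e => k * f e).
Proof.
  intros Hf m. destruct (Hf m) as [C [e0 [He0 H]]]. exists (Rabs k * C), e0. split; auto.
  intros e He He'. rewrite Rabs_mult, Rmult_assoc.
  apply Rmult_le_compat_l; auto using Rabs_pos.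
Qed.

Lemma negligible_opp f : negligible f -> negligible (fun e => - f e).
Proof.
  intros Hf. apply (negligible_ext _ (fun e => (-1) * f e)); [intros; ring|].
  now apply negligible_scal.
Qed.

Lemma negligible_minus f g : negligible f -> negligible g -> negligible (fun e => f e - g e).
Proof. intros. apply negligible_plus; auto using negligible_opp. Qed.

Lemma moderate_nonneg_bound f : moderate f -> exists N C eps0, 0 < eps0 /\ 0 <= C /\
  forall e, Iint e -> e <= eps0 -> Rabs (f e) <= C / e ^ N.
Proof.
  intros [N [C [e0 [He0 H]]]]. exists N, (Rabs C), e0. repeat split; auto using Rabs_pos.
  intros e He He'. apply Rle_trans with (1 := H e He He'). unfold Rdiv.
  apply Rmult_le_compat_r; [left; apply Rinv_0_lt_compat, pow_pos_I; auto | apply Rle_abs].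
Qed.

Lemma moderate_le f g : (forall e, Iint e -> Rabs (f e) <= Rabs (g e)) ->
  moderate g -> moderate f.
Proof.
  intros H [N [C [e0 [He0 HC]]]]. exists N, C, e0. split; auto.
  intros e He He'. apply Rle_trans with (1 := H e He); auto.
Qed.

Lemma moderate_const c : moderate (fun _ => c).
Proof. exists 0%nat, (Rabs c), 1. split; [lra|]. intros e _ _. simpl. lra. Qed.

Lemma moderate_abs f : moderate f -> moderate (fun e => Rabs (f e)).
Proof. apply moderate_le. intros e _. rewrite Rabs_Rabsolu; lra. Qed.

Lemma moderate_opp f : moderate f -> moderate (fun e => - f e).
Proof. apply moderate_le. intros e _. rewrite Rabs_Ropp; lra. Qed.

Lemma moderate_plus f g : moderate f -> moderate g -> moderate (fun e => f e + g e).
Proof.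
  intros Hf Hg.
  destruct (moderate_nonneg_bound _ Hf) as [N1 [C1 [e1 [He1 [HC1 H1]]]]].
  destruct (moderate_nonneg_bound _ Hg) as [N2 [C2 [e2 [He2 [HC2 H2]]]]].
  assert (Hshift : forall C N k e, 0 <= C -> Iint e -> C / e ^ N <= C / e ^ (N + k)).
  { intros C N k e HC He. unfold Rdiv. apply Rmult_le_compat_l; auto.
    apply Rinv_le_contravar; [apply pow_pos_I; auto|].
    rewrite pow_add. pose proof (pow_pos_I e N He). pose proof (pow_le_1_I e k He).
    pose proof (pow_pos_I e k He). nra. }
  exists (N1 + N2)%nat, (C1 + C2), (Rmin e1 e2). split; [now apply Rmin_pos|].
  intros e He He'. pose proof (Rmin_l e1 e2). pose proof (Rmin_r e1 e2).
  specialize (H1 e He ltac:(lra)). specialize (H2 e He ltac:(lra)).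
  pose proof (Hshift C1 N1 N2 e HC1 He). pose proof (Hshift C2 N2 N1 e HC2 He).
  rewrite Nat.add_comm in H4.
  apply Rle_trans with (1 := Rabs_triang _ _). unfold Rdiv in *. lra.
Qed.

Lemma moderate_minus f g : moderate f -> moderate g -> moderate (fun e => f e - g e).
Proof. intros. apply moderate_plus; auto using moderate_opp. Qed.

Lemma negligible_moderate f : negligible f -> moderate f.
Proof.
  intros Hf. destruct (Hf 0%nat) as [C [e0 [He0 H]]]. exists 0%nat, C, e0. split; auto.
  intros e He He'. specialize (H e He He'). simpl in *. lra.
Qed.

Lemma negligible_mult f g : negligible f -> moderate g -> negligible (fun e => f e * g e).
Proof.
  intros Hf Hg m. destruct (moderate_nonneg_bound _ Hg) as [N [C2 [e2 [He2 [HC2 H2]]]]].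
  destruct (Hf (m + N)%nat) as [C1 [e1 [He1 H1]]].
  exists (Rabs C1 * C2), (Rmin e1 e2). split; [now apply Rmin_pos|].
  intros e He He'. pose proof (Rmin_l e1 e2). pose proof (Rmin_r e1 e2).
  specialize (H1 e He ltac:(lra)). specialize (H2 e He ltac:(lra)).
  pose proof (pow_pos_I e N He). pose proof (pow_pos_I e (m + N) He).
  assert (H1' : Rabs (f e) <= Rabs C1 * e ^ (m + N))
    by (apply Rle_trans with (1 := H1); apply Rmult_le_compat_r; auto using Rle_abs; lra).
  rewrite Rabs_mult.
  apply Rle_trans with ((Rabs C1 * e ^ (m + N)) * (C2 / e ^ N)).
  - apply Rmult_le_compat; auto using Rabs_pos.
  - rewrite pow_add. right. field. lra.
Qed.

Lemma negligible_of_sqr_le f g : (forall e, Iint e -> f e * f e <= g e) ->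
  negligible g -> negligible f.
Proof.
  intros H Hg m. destruct (Hg (2 * m)%nat) as [C [e0 [He0 HC]]].
  exists (sqrt (Rabs C)), e0. split; auto. intros e He He'.
  specialize (H e He). specialize (HC e He He'). pose proof (pow_pos_I e m He).
  rewrite <- (sqrt_Rsqr_abs (f e)).
  replace (sqrt (Rabs C) * e ^ m) with (sqrt (Rabs C * (e ^ m * e ^ m)))
    by (rewrite sqrt_mult, sqrt_square; auto using Rabs_pos; nra).
  apply sqrt_le_1_alt. unfold Rsqr. apply Rle_trans with (1 := H).
  apply Rle_trans with (1 := Rle_abs _). apply Rle_trans with (1 := HC).
  rewrite <- pow_add. replace (m + m)%nat with (2 * m)%nat by lia.
  apply Rmult_le_compat_r; [left; apply pow_pos_I|apply Rle_abs]; auto.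
Qed.

Definition flat (e : R) : R := exp (- / e).

Lemma flat_pos e : 0 < flat e.
Proof. apply exp_pos. Qed.

Lemma smooth_flat : smooth_on_I flat.
Proof.
  apply smooth_exp, smooth_opp, smooth_inv; [apply smooth_id|].
  intros t [h1 h2]. lra.
Qed.

Lemma exp_INR_mult n y : exp (INR n * y) = exp y ^ n.
Proof.
  induction n as [|n IH]; [simpl; rewrite Rmult_0_l; apply exp_0|].
  rewrite S_INR, Rmult_plus_distr_r, Rmult_1_l, exp_plus, IH. simpl. ring.
Qed.

(** For [m > 0], [exp (1/e) = exp (y)^m >= y^m] with [y = 1/(m e)]. *)
Lemma negligible_flat : negligible flat.
Proof.
  intros m. exists (INR m ^ m), 1. split; [lra|]. intros e [h1 h2] _.
  unfold flat. rewrite Rabs_pos_eq by (left; apply exp_pos).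
  destruct m as [|k].
  - simpl. rewrite Rmult_1_l, <- exp_0. left. apply exp_increasing.
    assert (0 < / e) by (apply Rinv_0_lt_compat; lra). lra.
  - set (m := S k). assert (Hm : 0 < INR m) by (apply lt_0_INR; unfold m; lia).
    set (y := / (e * INR m)).
    assert (Hy : 0 < y) by (apply Rinv_0_lt_compat, Rmult_lt_0_compat; lra).
    replace (/ e) with (INR m * y) by (unfold y; field; lra).
    rewrite exp_Ropp, exp_INR_mult.
    assert (Hyp : 0 < y ^ m) by (apply pow_lt; auto).
    apply Rle_trans with (/ y ^ m).
    + apply Rinv_le_contravar; auto. apply pow_incr. pose proof (exp_ineq1_le y). lra.
    + assert (Hk : y ^ m * (INR m ^ m * e ^ m) = 1).
      { rewrite <- !Rpow_mult_distr.
        replace (y * (INR m * e)) with 1 by (unfold y; field; lra). apply pow1. }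
      right. apply (Rmult_eq_reg_l (y ^ m)); [|lra]. rewrite Hk. field. lra.
Qed.

Lemma Rabs_mult_self u : Rabs u * Rabs u = u * u.
Proof. rewrite <- Rabs_mult. apply Rabs_pos_eq, Rle_0_sqr. Qed.

Lemma sqrt_sum_sqr_le u v : sqrt (u * u + v * v) <= Rabs u + Rabs v.
Proof.
  pose proof (Rabs_pos u). pose proof (Rabs_pos v).
  rewrite <- (sqrt_square (Rabs u + Rabs v)) by lra. apply sqrt_le_1_alt.
  rewrite <- (Rabs_mult_self u), <- (Rabs_mult_self v). nra.
Qed.

Lemma Rabs_lt_sqrt_sum_sqr u v : v <> 0 -> Rabs u < sqrt (u * u + v * v).
Proof.
  intros Hv. rewrite <- sqrt_Rsqr_abs. unfold Rsqr.
  apply sqrt_lt_1_alt. split; [apply Rle_0_sqr|].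
  assert (0 < v * v) by (apply Rsqr_pos_lt; auto). lra.
Qed.

(** [h = sqrt (g^2 + flat^2) - g] lies between [max (0, -g)] and
    [2 max (0, -g) + flat]. *)
Lemma smooth_negligible_majorant (g n : net) :
  smooth_on_I g -> negligible n -> (forall t, Iint t -> - g t <= n t) ->
  exists h, smooth_on_I h /\ negligible h /\
    forall t, Iint t -> 0 < h t /\ - g t <= h t.
Proof.
  intros Hg Hn Hgn.
  set (w := fun t => sqrt (g t * g t + flat t * flat t)).
  assert (Hw : forall t, Rabs (g t) < w t /\ w t <= Rabs (g t) + flat t).
  { intros t. pose proof (flat_pos t). split.
    - apply Rabs_lt_sqrt_sum_sqr. lra.
    - apply Rle_trans with (1 := sqrt_sum_sqr_le _ _).
      rewrite (Rabs_pos_eq (flat t)) by lra. lra. }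
  exists (fun t => w t - g t). split; [|split].
  - apply smooth_minus; auto. apply smooth_sqrt.
    + apply smooth_plus; apply smooth_mult; auto using smooth_flat.
    + intros t _. pose proof (flat_pos t). pose proof (Rle_0_sqr (g t)).
      assert (0 < flat t * flat t) by nra. unfold Rsqr in *. lra.
  - apply (negligible_le _ (fun t => 2 * Rabs (n t) + flat t)).
    + intros t Ht. destruct (Hw t) as [w1 w2]. specialize (Hgn t Ht).
      pose proof (Rle_abs (n t)). pose proof (Rle_abs (g t)). pose proof (Rle_abs (- g t)).
      rewrite Rabs_Ropp in *. rewrite Rabs_pos_eq by lra.
      destruct (Rle_dec 0 (g t)).
      * rewrite Rabs_pos_eq in w2 by auto. pose proof (Rabs_pos (n t)). lra.
      * rewrite Rabs_left in w2 by lra. lra.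
    + apply negligible_plus; [apply negligible_scal, negligible_abs; auto|].
      apply negligible_flat.
  - intros t _. destruct (Hw t) as [w1 _].
    pose proof (Rle_abs (g t)). pose proof (Rle_abs (- g t)). rewrite Rabs_Ropp in *. lra.
Qed.

(** [Y^2 - X^2 <= D := (Y^2 - a^2) + (b^2 - X^2) + (b - a) h], where [h] is a
    smooth majorant of [-(a + b)]: then [b^2 - a^2 + (b - a) h >= 0]. *)
Lemma sqr_le_sqr_plus_smooth_negligible (X Y a b : net) :
  smooth_on_I X -> smooth_on_I Y -> smooth_on_I a -> smooth_on_I b ->
  moderate X -> moderate Y -> moderate a -> moderate b ->
  negligible (fun e => a e - Rabs (Y e)) -> negligible (fun e => b e - Rabs (X e)) ->
  (forall e, Iint e -> a e <= b e) ->
  exists phi, smooth_on_I phi /\ negligible phi /\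
    forall e, Iint e -> 0 < phi e /\ Y e * Y e <= X e * X e + phi e.
Proof.
  intros sX sY sa sb mX mY ma mb nYa nXb ab.
  destruct (smooth_negligible_majorant (fun e => a e + b e)
              (fun e => Rabs (a e - Rabs (Y e)) + Rabs (b e - Rabs (X e))))
    as [h [sh [nh Hh]]].
  { now apply smooth_plus. }
  { apply negligible_plus; now apply negligible_abs. }
  { intros e _. pose proof (Rabs_pos (Y e)). pose proof (Rabs_pos (X e)).
    pose proof (Rle_abs (- (a e - Rabs (Y e)))). pose proof (Rle_abs (- (b e - Rabs (X e)))).
    rewrite !Rabs_Ropp in *. lra. }
  set (D := fun e => (Y e * Y e - a e * a e) + (b e * b e - X e * X e) + (b e - a e) * h e).
  destruct (smooth_negligible_majorant (fun e => - D e) D) as [phi [sphi [nphi Hphi]]].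
  - apply smooth_opp. unfold D. apply smooth_plus.
    + apply smooth_plus; apply smooth_minus; apply smooth_mult; auto.
    + apply smooth_mult; auto using smooth_minus.
  - unfold D. apply negligible_plus; [apply negligible_plus|].
    + apply (negligible_ext _ (fun e => - (a e - Rabs (Y e)) * (Rabs (Y e) + a e))).
      { intros e _. cbv beta. rewrite <- (Rabs_mult_self (Y e)). ring. }
      apply negligible_mult; [now apply negligible_opp|].
      apply moderate_plus; auto using moderate_abs.
    + apply (negligible_ext _ (fun e => (b e - Rabs (X e)) * (Rabs (X e) + b e))).
      { intros e _. cbv beta. rewrite <- (Rabs_mult_self (X e)). ring. }
      apply negligible_mult; auto. apply moderate_plus; auto using moderate_abs.
    + apply (negligible_ext _ (fun e => h e * (b e - a e))); [intros; ring|].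
      apply negligible_mult; auto. now apply moderate_minus.
  - intros e _. lra.
  - exists phi. split; [|split]; auto. intros e He.
    destruct (Hphi e He) as [phi_pos HDphi]. destruct (Hh e He) as [_ Hah].
    split; auto. specialize (ab e He).
    assert (0 <= (b e - a e) * (b e + a e + h e)) by (apply Rmult_le_pos; lra).
    unfold D in HDphi. nra.
Qed.

(** [c = X Y / (X^2 + phi)]; the remainder is [Y - c X = Y phi / (X^2 + phi)]. *)
Lemma smooth_factor_of_sqr_le (X Y phi : net) :
  smooth_on_I X -> smooth_on_I Y -> smooth_on_I phi -> negligible phi ->
  (forall e, Iint e -> 0 < phi e /\ Y e * Y e <= X e * X e + phi e) ->
  exists c, smooth_on_I c /\ (forall e, Iint e -> Rabs (c e) <= 1) /\
    negligible (fun e => Y e - c e * X e).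
Proof.
  intros sX sY sphi nphi HYX.
  set (s := fun e => X e * X e + phi e).
  assert (Hs : forall e, Iint e ->
    0 < phi e /\ phi e <= s e /\ X e * X e <= s e /\ Y e * Y e <= s e).
  { intros e He. destruct (HYX e He). pose proof (Rle_0_sqr (X e)). unfold s, Rsqr in *. lra. }
  exists (fun e => X e * Y e / s e). split; [|split].
  - apply smooth_mult; [apply smooth_mult; auto|].
    apply smooth_inv; [apply smooth_plus, sphi; apply smooth_mult; auto|].
    intros e He. destruct (Hs e He) as [? [? _]]. lra.
  - intros e He. destruct (Hs e He) as [phi_pos [phis [Xs Ys]]].
    assert (Hsq : (X e * Y e / s e) * (X e * Y e / s e) <= 1).
    { apply (Rmult_le_reg_r (s e * s e)); [nra|].
      replace (X e * Y e / s e * (X e * Y e / s e) * (s e * s e))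
        with ((X e * X e) * (Y e * Y e)) by (field; lra).
      pose proof (Rle_0_sqr (X e)). pose proof (Rle_0_sqr (Y e)). unfold Rsqr in *.
      apply Rle_trans with (s e * s e); [apply Rmult_le_compat|]; lra. }
    rewrite <- (Rabs_mult_self (X e * Y e / s e)) in Hsq.
    pose proof (Rabs_pos (X e * Y e / s e)). nra.
  - apply (negligible_of_sqr_le _ phi); auto. intros e He.
    destruct (Hs e He) as [phi_pos [phis [Xs Ys]]].
    replace (Y e - X e * Y e / s e * X e) with (Y e * phi e / s e) by (unfold s in *; field; lra).
    apply (Rmult_le_reg_r (s e * s e)); [nra|].
    replace (Y e * phi e / s e * (Y e * phi e / s e) * (s e * s e))
      with ((Y e * Y e) * (phi e * phi e)) by (field; lra).
    apply Rle_trans with (s e * (phi e * phi e)); [apply Rmult_le_compat_r; nra|].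
    replace (phi e * (s e * s e)) with (s e * (s e * phi e)) by ring.
    apply Rmult_le_compat_l; nra.
Qed.

Lemma qset_rep x : qset x = cls (rep x).
Proof.
  unfold rep. destruct (constructive_indefinite_description _ (qok x)) as [r Hr]. exact Hr.
Qed.

Lemma qset_negligible x r : qset x r -> negligible (fun e => r e - rep x e).
Proof. now rewrite qset_rep. Qed.

Lemma Q_ext x y : qset x = qset y -> x = y.
Proof.
  destruct x as [qx px], y as [qy py]; simpl. intros ->. f_equal. apply proof_irrelevance.
Qed.

Lemma class_rep x : class (rep x) = x.
Proof. apply Q_ext. simpl. now rewrite qset_rep. Qed.

Lemma class_eq r s : negligible (fun e => r e - s e) -> class r = class s.
Proof.
  intros H. apply Q_ext, functional_extensionality. intros t.
  apply propositional_extensionality. unfold class, cls. simpl. split; intros H'.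
  - apply (negligible_ext _ (fun e => (t e - r e) + (r e - s e))); [intros; ring|].
    now apply negligible_plus.
  - apply (negligible_ext _ (fun e => (t e - s e) - (r e - s e))); [intros; ring|].
    now apply negligible_minus.
Qed.

Lemma qset_class r : qset (class r) r.
Proof. apply (negligible_ext _ (fun _ => 0)); [intros; ring | apply negligible_zero]. Qed.

Lemma negligible_sub_abs a r s : negligible (fun e => a e - Rabs (s e)) ->
  negligible (fun e => r e - s e) -> negligible (fun e => a e - Rabs (r e)).
Proof.
  intros Has Hrs.
  apply (negligible_ext _ (fun e => (a e - Rabs (s e)) - (Rabs (r e) - Rabs (s e))));
    [intros; ring|].
  apply negligible_minus; auto.
  apply (negligible_le _ (fun e => Rabs (r e - s e))); [|now apply negligible_abs].
  intros e _. apply Rabs_triang_inv2.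
Qed.

Lemma qmul_class_eq c X Y x y : moderate c -> moderate X -> qset x X -> qset y Y ->
  negligible (fun e => Y e - c e * X e) -> qmul (class c) x = y.
Proof.
  intros mc mX Xx Yy nr. rewrite <- (class_rep y). apply class_eq.
  apply qset_negligible in Xx, Yy. pose proof (qset_negligible _ _ (qset_class c)) as nc.
  apply (negligible_ext _ (fun e => (c e - rep (class c) e) * (X e - rep x e)
      - (c e - rep (class c) e) * X e - (X e - rep x e) * c e
      - (Y e - c e * X e) + (Y e - rep y e))).
  { intros e _. unfold qmul. ring. }
  apply negligible_plus; auto. apply negligible_minus; auto.
  apply negligible_minus; [apply negligible_minus|]; apply negligible_mult; auto.
  now apply negligible_moderate.
Qed.

Theorem proposition4p25 :
  forall J : Q -> Prop, is_ideal_sm J ->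
  forall x y : Q, in_Rsm x -> in_Rsm y -> J x ->
    qle (qabs y) (qabs x) -> J y.
Proof.
  intros J [_ [_ [_ [_ Jmul]]]] x y [X [[sX mX] Xx]] [Y [[sY mY] Yy]] Jx
    [a [b [[sa ma] [[sb mb] [aY [bX ab]]]]]].
  assert (nYa : negligible (fun e => a e - Rabs (Y e)))
    by exact (negligible_sub_abs _ _ _ aY (qset_negligible _ _ Yy)).
  assert (nXb : negligible (fun e => b e - Rabs (X e)))
    by exact (negligible_sub_abs _ _ _ bX (qset_negligible _ _ Xx)).
  destruct (sqr_le_sqr_plus_smooth_negligible X Y a b) as [phi [sphi [nphi HYX]]]; auto.
  destruct (smooth_factor_of_sqr_le X Y phi) as [c [sc [bc nr]]]; auto.
  assert (mc : moderate c)
    by (apply (moderate_le _ (fun _ => 1)); [intros; rewrite Rabs_R1; auto | apply moderate_const]).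
  rewrite <- (qmul_class_eq c X Y x y); auto.
  apply Jmul; auto. exists c. split; [split; auto | apply qset_class].
Qed.
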